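(* Let $T\ge 1$ be an integer and let $\phi:\mathbb R\to(0,1)$ be a gate function. Consider the loss $L(z)=|\phi(z)^{T}-1|$ and the gradient flow $\frac{dz}{d\tau}=-\frac{\partial L}{\partial z}$ with an arbitrary initial value $z(0)\in\mathbb R$, and let $f(\tau)=\phi(z(\tau))$. (a) If $\phi=\sigma$ is the sigmoid function $\sigma(z)=1/(1+e^{-z})$, then $1-f(\tau)=O(\tau^{-1})$ as $\tau\to\infty$. (b) If $\phi=\sigma_{\rm ns}$ is the normalized softsign function $\sigma_{\rm ns}(z)=\frac12\left(\frac{z}{2+|z|}+1\right)$, then $1-f(\tau)=O(\tau^{-1/3})$ as $\tau\to\infty$.
   Context: This is a model problem for learning long time scales: $T=t_1-t_0$ is a time difference, $f=\phi(z)$ is a forget-gate value, and the target decay factor is $\lambda_*=1$. Note $\sigma_{\rm ns}(z)=(\mathrm{softsign}(z/2)+1)/2$ with $\mathrm{softsign}(z)=z/(1+|z|)$. *)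

From Stdlib Require Import Reals.
From Coquelicot Require Import Coquelicot.
Open Scope R_scope.

Definition sigmoid (z : R) : R := 1 / (1 + exp (- z)).

Definition softsign_ns (z : R) : R := (z / (2 + Rabs z) + 1) / 2.

Definition loss (phi : R -> R) (T : nat) (z : R) : R := Rabs (phi z ^ T - 1).

Definition gradient_flow (phi : R -> R) (T : nat) (z : R -> R) : Prop :=
  forall tau, 0 < tau ->
    exists dL, is_derive (loss phi T) (z tau) dL /\ is_derive z tau (- dL).

Definition bigO_infty (g h : R -> R) : Prop :=
  exists C M, forall tau, M <= tau -> Rabs (g tau) <= C * Rabs (h tau).

(* Along the flow, z' = T phi'(z) phi(z)^(T-1) >= 0, so z is nondecreasing and
   phi(z(tau)) >= phi(z(1)) for tau >= 1.  Hence any potential G for which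
   G' phi' phi^(T-1) stays bounded below grows at least linearly along z.  For the
   sigmoid take G = exp (exp * sigma' = sigma^2) and use 1 - sigma(z) = 1/(1 + e^z);
   for the normalized softsign take the antiderivative G of (2 + |x|)^2 = 1/sigma_ns',
   and use 1 - sigma_ns(z) = 1/(2 + z) with (2 + z)^3 = 3 G(z) + 8 for z >= 0. *)

From Stdlib Require Import Reals Lra Lia.
From Coquelicot Require Import Coquelicot.
Open Scope R_scope.

Lemma linear_lower_bound_of_derive_ge (F dF : R -> R) (c a b : R) : a <= b ->
  (forall t, a <= t <= b -> is_derive F t (dF t)) ->
  (forall t, a <= t <= b -> c <= dF t) ->
  F a + c * (b - a) <= F b.
Proof.
intros hab hF hc.
destruct (MVT_gen F a b dF) as [t [ht hmvt]].
- intros t; rewrite Rmin_left, Rmax_right by lra; intros; apply hF; lra.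
- intros t; rewrite Rmin_left, Rmax_right by lra; intros.
  apply derivable_continuous_pt; exists (dF t); apply is_derive_Reals, hF; lra.
- rewrite Rmin_left, Rmax_right in ht by lra.
  assert (c <= dF t) by (apply hc; lra). nra.
Qed.

Lemma nondecreasing_of_derive_ge0 (F dF : R -> R) :
  (forall x, is_derive F x (dF x)) -> (forall x, 0 <= dF x) ->
  forall a b, a <= b -> F a <= F b.
Proof.
intros hF hdF a b hab.
pose proof (linear_lower_bound_of_derive_ge F dF 0 a b hab
  (fun t _ => hF t) (fun t _ => hdF t)).
lra.
Qed.

Lemma is_derive_glue_at_0 (f df g dg h dh : R -> R) :
  (forall y, y <= 0 -> f y = g y /\ df y = dg y) ->
  (forall y, 0 <= y -> f y = h y /\ df y = dh y) ->
  (forall y, y <= 0 -> is_derive g y (dg y)) ->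
  (forall y, 0 <= y -> is_derive h y (dh y)) ->
  forall x, is_derive f x (df x).
Proof.
intros hfg hfh hg hh x.
destruct (Rtotal_order x 0) as [hx | [-> | hx]].
- destruct (hfg x) as [_ ->]; [lra |].
  apply is_derive_ext_loc with g; [| apply hg; lra].
  apply filter_imp with (fun y => y < 0); [| exact (open_lt 0 x hx)].
  intros y hy; symmetry; apply hfg; lra.
- destruct (hfg 0 (Rle_refl 0)) as [hf0 hdf0].
  destruct (hfh 0 (Rle_refl 0)) as [hf0' hdf0'].
  apply is_derive_Reals; intros eps heps.
  destruct (proj1 (is_derive_Reals _ _ _) (hg 0 (Rle_refl 0)) eps heps) as [dl hdl].
  destruct (proj1 (is_derive_Reals _ _ _) (hh 0 (Rle_refl 0)) eps heps) as [dr hdr].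
  exists (mkposreal _ (Rmin_pos _ _ (cond_pos dl) (cond_pos dr))); simpl.
  intros y hy hyd.
  pose proof (Rmin_l dl dr); pose proof (Rmin_r dl dr).
  rewrite Rplus_0_l in *.
  destruct (Rle_or_lt y 0) as [hy0 | hy0].
  + rewrite (proj1 (hfg y hy0)), hf0, hdf0.
    specialize (hdl y hy ltac:(lra)); rewrite Rplus_0_l in hdl; exact hdl.
  + rewrite (proj1 (hfh y ltac:(lra))), hf0', hdf0'.
    specialize (hdr y hy ltac:(lra)); rewrite Rplus_0_l in hdr; exact hdr.
- destruct (hfh x) as [_ ->]; [lra |].
  apply is_derive_ext_loc with h; [| apply hh; lra].
  apply filter_imp with (fun y => 0 < y); [| exact (open_gt 0 x hx)].
  intros y hy; symmetry; apply hfh; lra.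
Qed.

Lemma inv_le_of_cube_ge (k tau y : R) : 0 < k -> 0 < tau -> 0 < y ->
  k * tau <= y ^ 3 -> / y <= / Rpower k (1 / 3) * Rpower tau (- (1 / 3)).
Proof.
intros hk htau hy hcube.
assert (hy3 : Rpower (y ^ 3) (1 / 3) = y).
{ rewrite <- Rpower_pow, Rpower_mult by exact hy.
  replace (INR 3 * (1 / 3)) with 1 by (simpl; field). apply Rpower_1, hy. }
rewrite Rpower_Ropp, <- Rinv_mult, Rpower_mult_distr by assumption.
apply Rinv_le_contravar; [apply exp_pos |].
rewrite <- hy3. apply Rle_Rpower_l; [lra | split; [nra | exact hcube]].
Qed.

Section GradientFlowOfGate.

Variables (phi dphi : R -> R) (T : nat) (z : R -> R).
Hypothesis phi_range : forall x, 0 < phi x < 1.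
Hypothesis phi_derive : forall x, is_derive phi x (dphi x).
Hypothesis dphi_ge0 : forall x, 0 <= dphi x.
Hypothesis flow : gradient_flow phi T z.

Lemma loss_eq_one_sub_pow (x : R) : loss phi T x = 1 - phi x ^ T.
Proof.
unfold loss. rewrite Rabs_left1; [ring |].
assert (phi x ^ T <= 1); [| lra].
rewrite <- (pow1 T). apply pow_incr. specialize (phi_range x); lra.
Qed.

Lemma gradient_flow_derive (tau : R) : 0 < tau ->
  is_derive z tau (INR T * dphi (z tau) * phi (z tau) ^ pred T).
Proof.
intros htau. destruct (flow tau htau) as [dL [hL hz]].
assert (hL' : is_derive (loss phi T) (z tau)
                (0 - INR T * dphi (z tau) * phi (z tau) ^ pred T)).
{ apply is_derive_ext with (fun x => 1 - phi x ^ T).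
  - intros x; symmetry; apply loss_eq_one_sub_pow.
  - exact (is_derive_minus (fun _ => 1) (fun x => phi x ^ T) (z tau) 0 _
      (is_derive_const 1 (z tau)) (is_derive_pow phi T _ _ (phi_derive (z tau)))). }
rewrite <- (is_derive_unique _ _ _ hL), (is_derive_unique _ _ _ hL') in hz.
replace (- (0 - INR T * dphi (z tau) * phi (z tau) ^ pred T))
  with (INR T * dphi (z tau) * phi (z tau) ^ pred T) in hz by ring.
exact hz.
Qed.

Lemma gradient_flow_nondecreasing (a b : R) : 0 < a <= b -> z a <= z b.
Proof.
intros hab.
pose proof (linear_lower_bound_of_derive_ge z
  (fun t => INR T * dphi (z t) * phi (z t) ^ pred T) 0 a b) as hlin.
enough (z a + 0 * (b - a) <= z b) by lra.
apply hlin; [lra | intros t ht; apply gradient_flow_derive; lra |].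
intros t _. apply Rmult_le_pos; [apply Rmult_le_pos; [apply pos_INR | apply dphi_ge0] |].
apply pow_le. specialize (phi_range (z t)); lra.
Qed.

Lemma gradient_flow_potential_growth (G dG : R -> R) (c : R) :
  (forall x, is_derive G x (dG x)) ->
  (forall x, z 1 <= x -> c <= dG x * (INR T * dphi x * phi x ^ pred T)) ->
  forall tau, 1 <= tau -> G (z 1) + c * (tau - 1) <= G (z tau).
Proof.
intros hG hc tau htau.
apply (linear_lower_bound_of_derive_ge (fun t => G (z t))
  (fun t => dG (z t) * (INR T * dphi (z t) * phi (z t) ^ pred T))); [exact htau | |].
- intros t ht. rewrite Rmult_comm.
  exact (is_derive_comp G z t _ _ (hG (z t)) (gradient_flow_derive t ltac:(lra))).
- intros t ht. apply hc, gradient_flow_nondecreasing; lra.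
Qed.

End GradientFlowOfGate.

Lemma sigmoid_exp (x : R) : sigmoid x = exp x / (1 + exp x).
Proof.
unfold sigmoid. rewrite exp_Ropp. pose proof (exp_pos x).
field. split; [| lra].
assert (0 < / exp x) by (apply Rinv_0_lt_compat; lra). lra.
Qed.

Lemma one_sub_sigmoid (x : R) : 1 - sigmoid x = / (1 + exp x).
Proof. rewrite sigmoid_exp. pose proof (exp_pos x). field. lra. Qed.

Lemma exp_mul_one_sub_sigmoid (x : R) : exp x * (1 - sigmoid x) = sigmoid x.
Proof. rewrite one_sub_sigmoid, sigmoid_exp. pose proof (exp_pos x). field. lra. Qed.

Lemma sigmoid_range (x : R) : 0 < sigmoid x < 1.
Proof.
pose proof (one_sub_sigmoid x). pose proof (exp_pos x).
assert (0 < / (1 + exp x) < 1); [| lra].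
split; [apply Rinv_0_lt_compat; lra |].
rewrite <- Rinv_1. apply Rinv_lt_contravar; lra.
Qed.

Lemma sigmoid_derive (x : R) : is_derive sigmoid x (sigmoid x * (1 - sigmoid x)).
Proof.
rewrite one_sub_sigmoid, sigmoid_exp.
apply is_derive_ext with (fun y => exp y / (1 + exp y)); [intros; symmetry; apply sigmoid_exp |].
pose proof (exp_pos x). auto_derive; [lra |]. field. lra.
Qed.

Lemma sigmoid_derive_ge0 (x : R) : 0 <= sigmoid x * (1 - sigmoid x).
Proof. pose proof (sigmoid_range x). apply Rmult_le_pos; lra. Qed.

Lemma sigmoid_gradient_flow_rate (T : nat) (z : R -> R) : (1 <= T)%nat ->
  gradient_flow sigmoid T z ->
  bigO_infty (fun tau => 1 - sigmoid (z tau)) (fun tau => / tau).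
Proof.
intros hT hflow.
set (s1 := sigmoid (z 1)).
pose proof (sigmoid_range (z 1)) as hs1; fold s1 in hs1.
set (c := INR T * s1 ^ 2 * s1 ^ pred T).
assert (hc : 0 < c).
{ apply Rmult_lt_0_compat; [apply Rmult_lt_0_compat |]; [apply lt_0_INR; lia | |];
    apply pow_lt; lra. }
assert (hgrowth : forall tau, 1 <= tau -> exp (z 1) + c * (tau - 1) <= exp (z tau)).
{ apply (gradient_flow_potential_growth _ _ T z sigmoid_range sigmoid_derive
    sigmoid_derive_ge0 hflow exp exp c is_derive_exp).
  intros x hx.
  assert (hsx : s1 <= sigmoid x)
    by exact (nondecreasing_of_derive_ge0 _ _ sigmoid_derive sigmoid_derive_ge0 _ _ hx).
  replace (exp x * (INR T * (sigmoid x * (1 - sigmoid x)) * sigmoid x ^ pred T))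
    with (INR T * (sigmoid x * (exp x * (1 - sigmoid x))) * sigmoid x ^ pred T) by ring.
  rewrite exp_mul_one_sub_sigmoid.
  apply Rmult_le_compat; [| apply pow_le; lra | | apply pow_incr; lra].
  - apply Rmult_le_pos; [apply pos_INR | apply pow_le; lra].
  - apply Rmult_le_compat_l; [apply pos_INR |]. simpl. nra. }
exists (2 / c), 2. intros tau htau.
specialize (hgrowth tau ltac:(lra)). pose proof (exp_pos (z 1)).
rewrite one_sub_sigmoid.
rewrite !Rabs_right by (apply Rle_ge, Rlt_le, Rinv_0_lt_compat; pose proof (exp_pos (z tau)); lra).
replace (2 / c * / tau) with (/ (c * tau / 2)) by (field; lra).
apply Rinv_le_contravar; nra.
Qed.

Lemma softsign_ns_nonpos (x : R) : x <= 0 -> softsign_ns x = / (2 - x).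
Proof. intros hx. unfold softsign_ns. rewrite Rabs_left1 by lra. field. lra. Qed.

Lemma softsign_ns_nonneg (x : R) : 0 <= x -> softsign_ns x = 1 - / (2 + x).
Proof. intros hx. unfold softsign_ns. rewrite Rabs_right by lra. field. lra. Qed.

Lemma softsign_ns_range (x : R) : 0 < softsign_ns x < 1.
Proof.
destruct (Rle_or_lt x 0) as [hx | hx].
- rewrite softsign_ns_nonpos by exact hx.
  assert (/ (2 - x) <= / 2) by (apply Rinv_le_contravar; lra).
  assert (0 < / (2 - x)) by (apply Rinv_0_lt_compat; lra). lra.
- rewrite softsign_ns_nonneg by lra.
  assert (/ (2 + x) <= / 2) by (apply Rinv_le_contravar; lra).
  assert (0 < / (2 + x)) by (apply Rinv_0_lt_compat; lra). lra.
Qed.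

Lemma softsign_ns_derive (x : R) : is_derive softsign_ns x (/ (2 + Rabs x) ^ 2).
Proof.
apply (is_derive_glue_at_0 softsign_ns (fun y => / (2 + Rabs y) ^ 2) (fun y => / (2 - y)) (fun y => / (2 - y) ^ 2)
  (fun y => 1 - / (2 + y)) (fun y => / (2 + y) ^ 2)).
- intros y hy. rewrite softsign_ns_nonpos, Rabs_left1 by exact hy. split; [easy | f_equal; ring].
- intros y hy. rewrite softsign_ns_nonneg, Rabs_right by lra. easy.
- intros y hy. auto_derive; [lra |]. field. lra.
- intros y hy. auto_derive; [lra |]. field. lra.
Qed.

Lemma softsign_ns_derive_ge0 (x : R) : 0 <= / (2 + Rabs x) ^ 2.
Proof. pose proof (Rabs_pos x). apply Rlt_le, Rinv_0_lt_compat, pow_lt. lra. Qed.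

Definition softsign_ns_potential (x : R) : R := 4 * x + 2 * (x * Rabs x) + x ^ 3 / 3.

Lemma softsign_ns_potential_derive (x : R) :
  is_derive softsign_ns_potential x ((2 + Rabs x) ^ 2).
Proof.
apply (is_derive_glue_at_0 softsign_ns_potential (fun y => (2 + Rabs y) ^ 2)
  (fun y => 4 * y - 2 * y ^ 2 + y ^ 3 / 3) (fun y => (2 - y) ^ 2)
  (fun y => 4 * y + 2 * y ^ 2 + y ^ 3 / 3) (fun y => (2 + y) ^ 2)).
- intros y hy. unfold softsign_ns_potential. rewrite Rabs_left1 by exact hy.
  split; [field | f_equal; ring].
- intros y hy. unfold softsign_ns_potential. rewrite Rabs_right by lra. split; [field | easy].
- intros y _. auto_derive; [easy |]. field.
- intros y _. auto_derive; [easy |]. field.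
Qed.

Lemma softsign_ns_potential_neg (x : R) : x < 0 -> softsign_ns_potential x < 0.
Proof. intros hx. unfold softsign_ns_potential. rewrite Rabs_left by exact hx. nra. Qed.

Lemma softsign_ns_potential_nonneg (x : R) :
  0 <= x -> (2 + x) ^ 3 = 3 * softsign_ns_potential x + 8.
Proof. intros hx. unfold softsign_ns_potential. rewrite Rabs_right by lra. field. Qed.

Lemma softsign_ns_gradient_flow_rate (T : nat) (z : R -> R) : (1 <= T)%nat ->
  gradient_flow softsign_ns T z ->
  bigO_infty (fun tau => 1 - softsign_ns (z tau)) (fun tau => Rpower tau (- (1 / 3))).
Proof.
intros hT hflow.
set (s1 := softsign_ns (z 1)).
pose proof (softsign_ns_range (z 1)) as hs1; fold s1 in hs1.
set (c := INR T * s1 ^ pred T).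
assert (hc : 0 < c) by (apply Rmult_lt_0_compat; [apply lt_0_INR; lia | apply pow_lt; lra]).
set (P1 := softsign_ns_potential (z 1)).
assert (hgrowth : forall tau, 1 <= tau ->
          P1 + c * (tau - 1) <= softsign_ns_potential (z tau)).
{ apply (gradient_flow_potential_growth _ _ T z softsign_ns_range softsign_ns_derive
    softsign_ns_derive_ge0 hflow _ _ c softsign_ns_potential_derive).
  intros x hx.
  assert (hsx : s1 <= softsign_ns x) by exact (nondecreasing_of_derive_ge0 _ _
    softsign_ns_derive softsign_ns_derive_ge0 _ _ hx).
  replace ((2 + Rabs x) ^ 2 * (INR T * / (2 + Rabs x) ^ 2 * softsign_ns x ^ pred T))
    with (INR T * softsign_ns x ^ pred T)
    by (pose proof (Rabs_pos x); field; lra).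
  apply Rmult_le_compat_l; [apply pos_INR | apply pow_incr; lra]. }
exists (/ Rpower (3 * c / 2) (1 / 3)), (2 + 2 * Rabs P1 / c). intros tau htau.
assert (hP1 : 0 <= Rabs P1 / c) by (apply Rdiv_le_0_compat; [apply Rabs_pos | lra]).
assert (hPtau : c * tau / 2 <= softsign_ns_potential (z tau)).
{ specialize (hgrowth tau ltac:(lra)).
  assert (Rabs P1 / c * c = Rabs P1) by (field; lra).
  pose proof (Rle_abs (- P1)) as hP1abs; rewrite Rabs_Ropp in hP1abs.
  nra. }
assert (hz : 0 <= z tau).
{ destruct (Rle_or_lt 0 (z tau)) as [h | h]; [exact h |].
  pose proof (softsign_ns_potential_neg _ h). nra. }
rewrite softsign_ns_nonneg by exact hz.
replace (1 - (1 - / (2 + z tau))) with (/ (2 + z tau)) by ring.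
rewrite !Rabs_right by (apply Rle_ge, Rlt_le;
  solve [apply exp_pos | apply Rinv_0_lt_compat; lra]).
apply inv_le_of_cube_ge; [lra | lra | lra |].
rewrite softsign_ns_potential_nonneg by exact hz. lra.
Qed.

Theorem proposition2 :
  (forall (T : nat) (z : R -> R), (1 <= T)%nat ->
     gradient_flow sigmoid T z ->
     bigO_infty (fun tau => 1 - sigmoid (z tau)) (fun tau => / tau))
  /\
  (forall (T : nat) (z : R -> R), (1 <= T)%nat ->
     gradient_flow softsign_ns T z ->
     bigO_infty (fun tau => 1 - softsign_ns (z tau))
                (fun tau => Rpower tau (- (1 / 3)))).
Proof. split; [exact sigmoid_gradient_flow_rate | exact softsign_ns_gradient_flow_rate]. Qed.
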